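(* Let $\alpha$ be an increasing sequence in $\{1,\dots,m\}$. For all $a,b\in\mathcal{S}_\alpha$, $$\operatorname{eval}_\alpha(a\cdot b)=\operatorname{eval}_\alpha(a)\cdot\operatorname{eval}_\alpha(b),$$ where on the left $\cdot$ is the (nested) product stream and on the right it is the pointwise product in $\mathcal{T}_\alpha$.
   Context: Fix a semiring $R$ (commutative additive monoid with $0$, multiplicative monoid with $1$, two-sided distributivity, $0\cdot x=x\cdot 0=0$; not necessarily commutative), an integer $m\ge1$, and finite nonempty totally ordered sets $I_1,\dots,I_m$. For an increasing sequence $\alpha=[i_1<\dots<i_n]$ in $\{1,\dots,m\}$, $I_\alpha=I_{i_1}\times\dots\times I_{i_n}$ and $\mathcal{T}_\alpha$ is the set of functions $I_\alpha\to R$ with pointwise operations ($\mathcal{T}_{[]}=R$); $\mathcal{T}_{i::\alpha}$ is identified with functions $I_i\to\mathcal{T}_\alpha$ by currying, where $i::\alpha$ is the sequence with head $i$ and tail $\alpha$. An indexed stream of type $I\to V$ is a tuple $(S,q,\iota,\nu,\mathrm{ready},\delta)$: state space $S$, current state $q$, $\iota:S\to I$, $\nu:S\to V$, $\mathrm{ready}:S\to\{\bot,\top\}$, $\delta:S\to S$; ''the stream $r$'' is the same tuple with current state $r$. $r$ is reachable from $q$ if $r=\delta^k(q)$, $k\ge0$; terminal if $\delta(r)=r$. $q$ is simple if: (Finite) some reachable state is terminal and every reachable terminal $t$ has $\mathrm{ready}(t)=\bot$; (Monotonic) $\iota(r)\le\iota(\delta(r))$ for reachable $r$; (Reduced) if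 $r$ reachable from $q$, $s$ reachable from $r$, both ready and $\iota(r)=\iota(s)$, then $r=s$. For $x\in I$ and $w$ in a commutative monoid $M$, $(x\mapsto w)$ is the function $I\to M$ equal to $w$ at $x$ and $0$ elsewhere. For a stream $q$ with finitely many reachable states and $g:V\to M$, $\llbracket q\rrbracket_g=\sum_{r\text{ reachable from }q,\ \mathrm{ready}(r)=\top}(\iota(r)\mapsto g(\nu(r)))$ (sum over the set of reachable states). Nested streams: $\mathcal{S}_{[]}=R$; $\mathcal{S}_{i::\alpha}$ = simple streams of type $I_i\to\mathcal{S}_\alpha$. $\operatorname{eval}_{[]}(q)=q$; $\operatorname{eval}_{i::\alpha}(q)=\llbracket q\rrbracket_{\operatorname{eval}_\alpha}$. Ordering: $a\le b$ iff $\iota(a)<\iota(b)$ or ($\iota(a)=\iota(b)$ and $\mathrm{ready}(a)=\bot$). Product stream of $a,b$ of type $I\to V$ with multiplication on $V$: state space $S_a\times S_b$, current state $(a,b)$, $\iota(a,b)=\max(\iota(a),\iota(b))$, $\nu(a,b)=\nu(a)\cdot\nu(b)$, $\mathrm{ready}(a,b)=\mathrm{ready}(a)\wedge\mathrm{ready}(b)\wedge(\iota(a)=\iota(b))$, $\delta(a,b)=(\delta(a),b)$ if $a\le b$ and $(a,\delta(b))$ otherwise. Multiplication on $\mathcal{S}_{[]}=R$ is the semiring product, and on $\mathcal{S}_{i::\alpha}$ it is the product stream using the multiplication of $\mathcal{S}_\alpha$ on values. *)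

From HB Require Import structures.
From mathcomp Require Import all_boot all_order all_algebra.
From mathcomp Require Import boolp classical_sets functions fsbigop.

Set Implicit Arguments.
Unset Strict Implicit.
Unset Printing Implicit Defensive.

Import Order.TTheory GRing.Theory.
Local Open Scope ring_scope.
Local Open Scope classical_set_scope.

(* A stream is a tuple (S, q, iota, nu, ready, delta).  The state space  *)
(* S is an arbitrary type (given as a choiceType, which is harmless      *)
(* classically; it is needed to sum over sets of states).                *)
Record stream (I V : Type) := Stream {
  St : choiceType;
  cur : St;
  idx : St -> I;
  val : St -> V;
  rdy : St -> bool;
  nxt : St -> St }.

Arguments Stream {I V}.

Section Streams.
Context {d : Order.disp_t} {I : orderType d} {V : Type}.
Implicit Types (s : stream I V).

Definition at_state s (r : St s) : stream I V :=
  Stream (St s) r (@idx _ _ s) (@val _ _ s) (@rdy _ _ s) (@nxt _ _ s).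

Definition reachable s (q r : St s) : Prop := exists k : nat, r = iter k (@nxt _ _ s) q.

Definition terminal s (r : St s) : Prop := nxt r = r.

Definition finite_stream s : Prop :=
  (exists2 t, reachable (cur s) t & terminal t) /\
  (forall t, reachable (cur s) t -> terminal t -> rdy t = false).

Definition monotonic_stream s : Prop :=
  forall r, reachable (cur s) r -> (idx r <= idx (nxt r))%O.

Definition reduced_stream s : Prop :=
  forall r t, reachable (cur s) r -> reachable r t ->
    rdy r -> rdy t -> idx r = idx t -> r = t.

Definition simple s : Prop :=
  [/\ finite_stream s, monotonic_stream s & reduced_stream s].

Definition single {M : nmodType} (x : I) (w : M) : I -> M :=
  fun y => if y == x then w else 0.

Definition sem {M : nmodType} s (g : V -> M) : I -> M :=
  \sum_(r \in [set r | reachable (cur s) r /\ rdy r]) single (idx r) (g (val r)).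

Definition state_le (W1 W2 : Type) (a : stream I W1) (b : stream I W2)
  (x : St a) (y : St b) : bool :=
  ((idx x < idx y)%O || ((idx x == idx y) && ~~ rdy x)).

Definition prod_stream (mulV : V -> V -> V) (a b : stream I V) : stream I V :=
  Stream (Choice.clone (St a * St b)%type _) (cur a, cur b)
    (fun p => Order.max (idx p.1) (idx p.2))
    (fun p => mulV (val p.1) (val p.2))
    (fun p => [&& rdy p.1, rdy p.2 & idx p.1 == idx p.2])
    (fun p => if state_le p.1 p.2 then (nxt p.1, p.2) else (p.1, nxt p.2)).

End Streams.

(* Nested tensors and nested streams, for a semiring R and finite        *)
(* nonempty totally ordered sets I_1, ..., I_m (indexed here by 'I_m,    *)
(* i.e. 0-based).                                                        *)
Section Nested.
Context (R : pzSemiRingType) (m : nat) (dI : 'I_m -> Order.disp_t)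
  (I : forall i : 'I_m, finOrderType (dI i)).

(* T_alpha : functions I_alpha -> R, curried *)
Fixpoint Ten (al : seq 'I_m) : nmodType :=
  match al with
  | [::] => R
  | i :: be => GRing.Nmodule.clone (I i -> Ten be) _
  end.

Fixpoint ten_mul (al : seq 'I_m) : Ten al -> Ten al -> Ten al :=
  match al return Ten al -> Ten al -> Ten al with
  | [::] => fun x y => (x * y)%R
  | i :: be => fun f g => fun x => ten_mul (f x) (g x)
  end.

Fixpoint RStr (al : seq 'I_m) : Type :=
  match al with
  | [::] => R
  | i :: be => stream (I i) (RStr be)
  end.

Fixpoint in_S (al : seq 'I_m) : RStr al -> Prop :=
  match al return RStr al -> Prop with
  | [::] => fun _ => True
  | i :: be => fun q => simple q /\ forall s : St q, in_S (val s)
  end.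

Fixpoint str_mul (al : seq 'I_m) : RStr al -> RStr al -> RStr al :=
  match al return RStr al -> RStr al -> RStr al with
  | [::] => fun x y => (x * y)%R
  | i :: be => fun a b => prod_stream (@str_mul be) a b
  end.

Fixpoint eval (al : seq 'I_m) : RStr al -> Ten al :=
  match al return RStr al -> Ten al with
  | [::] => fun q => q
  | i :: be => fun q => sem q (@eval be)
  end.

End Nested.

(* Evaluation is pointwise: at an index x, a simple stream contributes the value of its
   unique reachable ready state at x, or 0 if there is none.  The ready states of the
   product stream are exactly the pairs of ready states of the factors at a common index,
   and each such pair is actually reached, because the product advances the factor that
   is behind and never steps past a ready state that the other factor can still match.
   Hence the value of the product at x is the product of the values, and induction on
   the nesting depth concludes. *)
From Pilot Require Import Defs.
From HB Require Import structures.
From mathcomp Require Import all_boot all_order all_algebra.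
From mathcomp Require Import boolp classical_sets functions fsbigop cardinality.
From mathcomp Require Import zify.

Set Implicit Arguments.
Unset Strict Implicit.
Unset Printing Implicit Defensive.

Import Order.TTheory GRing.Theory.
Local Open Scope ring_scope.
Local Open Scope classical_set_scope.

Section Reachability.
Context {d : Order.disp_t} {I : orderType d} {V : Type}.
Implicit Types (s : stream I V).

Lemma reachable_refl s (q : St s) : reachable q q.
Proof. by exists 0%N. Qed.

Lemma reachable_nxt s (q r : St s) : reachable q r -> reachable q (nxt r).
Proof. by case=> k ->; exists k.+1. Qed.

Lemma reachable_trans s (q r t : St s) :
  reachable q r -> reachable r t -> reachable q t.
Proof. by case=> k -> [l ->]; exists (l + k)%N; rewrite iterD. Qed.

Lemma reachable_iter s (q : St s) k n : (k <= n)%N ->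
  reachable (iter k (@nxt _ _ s) q) (iter n (@nxt _ _ s) q).
Proof. by move=> le_kn; exists (n - k)%N; rewrite -iterD subnK. Qed.

Lemma reachable_total s (q r t : St s) : reachable q r -> reachable q t ->
  reachable r t \/ reachable t r.
Proof.
case=> k -> [l ->]; case: (leqP k l) => [le_kl | /ltnW le_lk].
  by left; apply: reachable_iter.
by right; apply: reachable_iter.
Qed.

Lemma idx_le_reachable s (r t : St s) : monotonic_stream s ->
  reachable (cur s) r -> reachable r t -> (idx r <= idx t)%O.
Proof.
move=> mono reach_r [k ->]; elim: k => [|k IHk] //=.
apply: le_trans IHk (mono _ _).
by apply: reachable_trans reach_r _; exists k.
Qed.

Definition ready_injective s : Prop :=
  forall r t, reachable (cur s) r -> reachable (cur s) t ->
    rdy r -> rdy t -> idx r = idx t -> r = t.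

Lemma reduced_ready_injective s : reduced_stream s -> ready_injective s.
Proof.
move=> red r t reach_r reach_t rdy_r rdy_t e.
by case: (reachable_total reach_r reach_t) => [rt | tr]; [|apply/esym]; apply: red.
Qed.

Lemma finite_reachable s : finite_stream s -> finite_set [set r | reachable (cur s) r].
Proof.
case=> -[_ [k ->] term] _; set A := fun n => iter n (@nxt _ _ s) (cur s).
have A_stops n : A (n + k)%N = A k by elim: n => //= n ->.
apply: (@sub_finite_set _ _ (A @` `I_k.+1)); last exact/finite_image/finite_II.
move=> _ [n ->]; case: (leqP n k) => [le_nk | /ltnW le_kn].
  by exists n => //=; rewrite ltnS.
by exists k => //=; rewrite -(subnK le_kn) -[RHS]/(A _) A_stops.
Qed.

Lemma sem_at {M : nmodType} s (g : V -> M) x :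
  finite_set [set r | reachable (cur s) r] ->
  sem s g x = \sum_(r \in [set r | reachable (cur s) r /\ rdy r])
                (if x == idx r then g (Defs.val r) else 0).
Proof.
move=> fin; have fin_rdy : finite_set [set r | reachable (cur s) r /\ rdy r].
  by apply: sub_finite_set fin => r [].
by rewrite /sem fsbig_finite // fct_sumE [RHS]fsbig_finite.
Qed.

Lemma sem_ready {M : nmodType} s (g : V -> M) (r : St s) :
  finite_set [set r | reachable (cur s) r] -> ready_injective s ->
  reachable (cur s) r -> rdy r -> sem s g (idx r) = g (Defs.val r).
Proof.
move=> fin inj reach_r rdy_r; rewrite sem_at //.
rewrite -(fsbig_widen [set r]) => [|_ -> //|t [[reach_t rdy_t] /= t_neq_r]].
  by rewrite fsbig_set1 eqxx.
by case: eqP => // e; case: t_neq_r; apply: inj.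
Qed.

Lemma sem_unready {M : nmodType} s (g : V -> M) x :
  finite_set [set r | reachable (cur s) r] ->
  (forall r, reachable (cur s) r -> rdy r -> idx r != x) -> sem s g x = 0.
Proof.
move=> fin none; rewrite sem_at //; apply: fsbig1 => r [reach_r rdy_r].
by rewrite eq_sym (negbTE (none r reach_r rdy_r)).
Qed.

End Reachability.

Section ProductStream.
Context {d : Order.disp_t} {I : orderType d} {V : Type}.
Variables (mulV : V -> V -> V) (a b : stream I V).
Local Notation P := (prod_stream mulV a b).

Lemma prod_reachable_components (p : St P) : reachable (cur P) p ->
  reachable (cur a) p.1 /\ reachable (cur b) p.2.
Proof.
case=> k ->; elim: k => [|k [IH1 IH2]]; first by split; apply: reachable_refl.
by rewrite iterS /=; case: ifP => _; split => //; apply: reachable_nxt.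
Qed.

Lemma prod_finite : finite_stream a -> finite_stream b ->
  finite_set [set p : St P | reachable (cur P) p].
Proof.
move=> fa fb; apply: (@sub_finite_set _ _
  ([set r | reachable (cur a) r] `*` [set r | reachable (cur b) r])).
  by move=> p /prod_reachable_components.
exact: finite_setX (finite_reachable fa) (finite_reachable fb).
Qed.

Lemma prod_ready_injective :
  ready_injective a -> ready_injective b -> ready_injective P.
Proof.
move=> inj_a inj_b [r1 r2] [t1 t2] /prod_reachable_components[/= ra1 ra2]
  /prod_reachable_components[/= ta1 ta2] /and3P[r1_rdy r2_rdy /eqP e_r]
  /and3P[t1_rdy t2_rdy /eqP e_t] /=.
rewrite -e_r -e_t !maxxx => e1.
have e2 : idx r2 = idx t2 by rewrite -e_r -e_t.
by rewrite (inj_a _ _ ra1 ta1 r1_rdy t1_rdy e1) (inj_b _ _ ra2 ta2 r2_rdy t2_rdy e2).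
Qed.

Lemma prod_reachable_ready (ra : St a) (rb : St b) :
  monotonic_stream a -> monotonic_stream b -> reduced_stream a ->
  reachable (cur a) ra -> reachable (cur b) rb -> rdy ra -> rdy rb ->
  idx ra = idx rb -> reachable (cur P) ((ra, rb) : St P).
Proof.
move=> ma mb rda [i ->] [j ->] ra_rdy rb_rdy e.
set A := fun k => iter k (@nxt _ _ a) (cur a); set B := fun k => iter k (@nxt _ _ b) (cur b).
have idxA k : (k <= i)%N -> (idx (A k) <= idx (A i))%O.
  by move=> le_ki; apply: idx_le_reachable (reachable_iter _ le_ki) => //; exists k.
have idxB k : (k <= j)%N -> (idx (B k) <= idx (B j))%O.
  by move=> le_kj; apply: idx_le_reachable (reachable_iter _ le_kj) => //; exists k.
suff: forall n k1 k2, (i - k1 + (j - k2))%N = n -> (k1 <= i)%N -> (k2 <= j)%N ->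
    reachable (cur P) ((A k1, B k2) : St P) -> reachable (cur P) ((A i, B j) : St P).
  by move=> reach_from; apply: (reach_from _ 0%N 0%N) => //; exact: reachable_refl.
elim=> [|n IH] k1 k2 hn le1 le2 reach_k.
  by move: reach_k; have [-> ->] : k1 = i /\ k2 = j by lia.
have := reachable_nxt reach_k; rewrite /= -!iterS -/(A k1.+1) -/(B k2.+1).
case: ifP => [step_a | step_b] reach_next.
  have lt1 : (k1 < i)%N.
    (* a ready state of [a] is never passed while [b] lags behind it *)
    rewrite ltn_neqAle le1 andbT; apply/eqP => ek; move: step_a.
    by rewrite ek /state_le ra_rdy andbF orbF e le_gtF // idxB.
  by apply: (IH k1.+1 k2) => //; lia.
have [lt2 | le_jk2] := ltnP k2 j; first by apply: (IH k1 k2.+1) => //; lia.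
have ek : k2 = j by lia.
move: step_b; rewrite ek /state_le -e lt_neqAle idxA // andbT.
case: eqP => //= e1 /negbFE rdy_k1.
(* [a] stalls on a ready state at the index of [rb]; reducedness makes it [ra] *)
have reached_i : A k1 = A i.
  by apply: rda => //; [exists k1 | exact: reachable_iter].
by move: reach_k; rewrite reached_i ek.
Qed.

Theorem sem_prod_stream {M : nmodType} (mulM : M -> M -> M) (g : V -> M) :
  (forall y, mulM 0 y = 0) -> (forall y, mulM y 0 = 0) ->
  (forall (r1 : St a) (r2 : St b),
     g (mulV (Defs.val r1) (Defs.val r2)) = mulM (g (Defs.val r1)) (g (Defs.val r2))) ->
  simple a -> simple b -> forall x, sem P g x = mulM (sem a g x) (sem b g x).
Proof.
move=> mul0M mulM0 g_mul [fa ma rda] [fb mb rdb] x.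
have finP := prod_finite fa fb.
have injP := prod_ready_injective (reduced_ready_injective rda) (reduced_ready_injective rdb).
have [[ra [reach_a rdy_a <-]] | noA] :=
  pselect (exists r, [/\ reachable (cur a) r, rdy r & idx r = x]); last first.
  rewrite (sem_unready _ (finite_reachable fa)) ?mul0M => [|r reach_r rdy_r].
    apply: sem_unready => // p /prod_reachable_components[reach_p _].
    move=> /and3P[rdy_p1 _ /eqP e]; rewrite /= -e maxxx.
    by apply/eqP => ex; apply: noA; exists p.1.
  by apply/eqP => ex; apply: noA; exists r.
have [[rb [reach_b rdy_b e]] | noB] :=
  pselect (exists r, [/\ reachable (cur b) r, rdy r & idx r = idx ra]); last first.
  rewrite [sem b g _](sem_unready _ (finite_reachable fb)) ?mulM0 => [|r reach_r rdy_r].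
    apply: sem_unready => // p /prod_reachable_components[_ reach_p].
    move=> /and3P[_ rdy_p2 /eqP e]; rewrite /= e maxxx.
    by apply/eqP => ex; apply: noB; exists p.2.
  by apply/eqP => ex; apply: noB; exists r.
have reach_ab := prod_reachable_ready ma mb rda reach_a reach_b rdy_a rdy_b (esym e).
have idx_ab : idx ((ra, rb) : St P) = idx ra by rewrite /= e maxxx.
rewrite -{1}idx_ab (sem_ready _ finP injP reach_ab); last by rewrite /= rdy_a rdy_b e eqxx.
rewrite (sem_ready _ (finite_reachable fa) (reduced_ready_injective rda) reach_a rdy_a).
rewrite -e (sem_ready _ (finite_reachable fb) (reduced_ready_injective rdb) reach_b rdy_b).
exact: g_mul.
Qed.

End ProductStream.

Section Nested.
Context (R : pzSemiRingType) (m : nat) (dI : 'I_m -> Order.disp_t)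
  (I : forall i : 'I_m, finOrderType (dI i)).

Lemma ten_mul0l (al : seq 'I_m) (y : Ten R I al) : ten_mul 0 y = 0.
Proof.
elim: al y => [|i be IH] y /=; first exact: mul0r.
by apply/funext => x; apply: IH.
Qed.

Lemma ten_mul0r (al : seq 'I_m) (y : Ten R I al) : ten_mul y 0 = 0.
Proof.
elim: al y => [|i be IH] y /=; first exact: mulr0.
by apply/funext => x; apply: IH.
Qed.

Lemma eval_str_mul (al : seq 'I_m) (a b : RStr R I al) :
  in_S a -> in_S b -> eval (str_mul a b) = ten_mul (eval a) (eval b).
Proof.
elim: al a b => [|i be IH] a b //= [simple_a val_a] [simple_b val_b].
apply/funext; apply: sem_prod_stream simple_a simple_b.
- exact: ten_mul0l.
- exact: ten_mul0r.
- by move=> r1 r2; apply: IH.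
Qed.

End Nested.

Theorem mainTheorem6 (R : pzSemiRingType) (m : nat) (dI : 'I_m -> Order.disp_t)
    (I : forall i : 'I_m, finOrderType (dI i))
    (hm : (0 < m)%N) (hI : forall i : 'I_m, (0 < #|I i|)%N)
    (al : seq 'I_m) (hal : sorted (fun i j : 'I_m => (i < j)%N) al)
    (a b : RStr R I al) :
  in_S a -> in_S b ->
  eval (str_mul a b) = ten_mul (eval a) (eval b).
Proof. exact: eval_str_mul. Qed.
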